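(* Let $x,p\in\mathbb{R}^d$ with $\lVert x\rVert=1$ and $\lVert p\rVert>1$, and let $y=\frac{p+x}{\lVert p+x\rVert}$. Then $$\Big\lVert\frac{p}{\lVert p\rVert}-y\Big\rVert\le\sqrt{2-2\sqrt{1-\frac{1}{\lVert p\rVert^2}}}.$$
   Context: $\lVert\cdot\rVert$ denotes the Euclidean norm on $\mathbb{R}^d$. *)

From mathcomp Require Import all_boot all_order all_algebra.
From mathcomp Require Import all_classical all_reals.
Set Implicit Arguments. Unset Strict Implicit. Unset Printing Implicit Defensive.
Import Order.TTheory GRing.Theory Num.Theory.
Local Open Scope ring_scope.

Definition enorm (R : realType) (d : nat) (v : 'rV[R]_d) : R :=
  Num.sqrt (\sum_(i < d) v 0 i ^+ 2).

(* With r = |p| and s = <p, x>, the unit vectors p/|p| and y are at distance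
   sqrt (2 - 2c), where c = (r^2 + s) / (r |p + x|) is their inner product.
   As |p + x|^2 = r^2 + 2s + 1, the identity
   (r^2 + s)^2 = (r^2 - 1) |p + x|^2 + (s + 1)^2 gives
   c >= sqrt (r^2 - 1) / r = sqrt (1 - 1/r^2). *)
From mathcomp Require Import all_boot all_order all_algebra.
From mathcomp Require Import all_classical all_reals.
From mathcomp Require Import ring lra.
Import Order.TTheory GRing.Theory Num.Theory.
Local Open Scope ring_scope.

Section EuclideanInnerProduct.
Context {R : realType} {d : nat}.
Implicit Types (u v w : 'rV[R]_d) (c : R).

Definition dotv u v : R := \sum_(i < d) u 0 i * v 0 i.

Lemma dotvC u v : dotv u v = dotv v u.
Proof. by apply: eq_bigr => i _; rewrite mulrC. Qed.

Lemma dotvDl u v w : dotv (u + v) w = dotv u w + dotv v w.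
Proof. by rewrite /dotv -big_split; apply: eq_bigr => i _; rewrite !mxE mulrDl. Qed.

Lemma dotvBl u v w : dotv (u - v) w = dotv u w - dotv v w.
Proof. by rewrite /dotv -sumrB; apply: eq_bigr => i _; rewrite !mxE mulrBl. Qed.

Lemma dotvZl c u v : dotv (c *: u) v = c * dotv u v.
Proof. by rewrite /dotv mulr_sumr; apply: eq_bigr => i _; rewrite !mxE mulrA. Qed.

Lemma dotvDr u v w : dotv u (v + w) = dotv u v + dotv u w.
Proof. by rewrite dotvC dotvDl !(dotvC u). Qed.

Lemma dotvBr u v w : dotv u (v - w) = dotv u v - dotv u w.
Proof. by rewrite dotvC dotvBl !(dotvC u). Qed.

Lemma dotvZr c u v : dotv u (c *: v) = c * dotv u v.
Proof. by rewrite dotvC dotvZl dotvC. Qed.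

Lemma dotvv_ge0 u : 0 <= dotv u u.
Proof. by apply: sumr_ge0 => i _; rewrite -expr2 sqr_ge0. Qed.

Lemma enormE u : enorm u = Num.sqrt (dotv u u).
Proof. by congr Num.sqrt; apply: eq_bigr => i _; rewrite expr2. Qed.

Lemma enorm_sqr u : enorm u ^+ 2 = dotv u u.
Proof. by rewrite enormE sqr_sqrtr ?dotvv_ge0. Qed.

Lemma enorm_ge0 u : 0 <= enorm u.
Proof. exact: sqrtr_ge0. Qed.

Lemma enormZ c u : enorm (c *: u) = `|c| * enorm u.
Proof.
by rewrite !enormE dotvZl dotvZr mulrA -expr2 sqrtrM ?sqr_ge0 // sqrtr_sqr.
Qed.

Lemma enorm_normalize u : enorm u != 0 -> enorm ((enorm u)^-1 *: u) = 1.
Proof.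
by move=> u0; rewrite enormZ normfV ger0_norm ?enorm_ge0 // mulVf.
Qed.

Lemma enormD_sqr u v :
  enorm (u + v) ^+ 2 = enorm u ^+ 2 + 2 * dotv u v + enorm v ^+ 2.
Proof. by rewrite !enorm_sqr dotvDl !dotvDr (dotvC v u); ring. Qed.

Lemma enormB_sqr u v :
  enorm (u - v) ^+ 2 = enorm u ^+ 2 - 2 * dotv u v + enorm v ^+ 2.
Proof. by rewrite !enorm_sqr dotvBl !dotvBr (dotvC v u); ring. Qed.

Lemma normr_dotv_le u v : enorm v = 1 -> `|dotv u v| <= enorm u.
Proof.
move=> v1; rewrite -ler_sqr ?nnegrE ?enorm_ge0 // real_normK ?num_real //.
have := sqr_ge0 (enorm (u - dotv u v *: v)).
rewrite enormB_sqr enormZ v1 dotvZr mulr1 real_normK ?num_real //.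
by rewrite !expr2; lra.
Qed.

Lemma enorm_normalizeB u v : enorm u != 0 -> enorm v != 0 ->
  enorm ((enorm u)^-1 *: u - (enorm v)^-1 *: v) =
    Num.sqrt (2 - 2 * (dotv u v / (enorm u * enorm v))).
Proof.
move=> u0 v0; rewrite enormE -enorm_sqr enormB_sqr !enorm_normalize //.
by rewrite dotvZl dotvZr; congr Num.sqrt; field; rewrite u0 v0.
Qed.

End EuclideanInnerProduct.

Lemma sqrt_1_subVsqr_le {R : rcfType} (r s n : R) :
  1 < r -> `|s| <= r -> n ^+ 2 = r ^+ 2 + 2 * s + 1 -> 0 < n ->
  Num.sqrt (1 - (r ^+ 2)^-1) <= (r ^+ 2 + s) / (r * n).
Proof.
move=> r_gt1 /ler_normlP[s_ge s_le] n2 n_gt0.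
have r0 : r != 0 by rewrite gt_eqF // (lt_trans ltr01).
have n0 : n != 0 by rewrite gt_eqF.
have cos_ge0 : 0 <= (r ^+ 2 + s) / (r * n).
  by rewrite divr_ge0 ?mulr_ge0 ?ltW //; nra.
rewrite -(ger0_norm cos_ge0) -sqrtr_sqr ler_wsqrtr // -subr_ge0.
have -> : ((r ^+ 2 + s) / (r * n)) ^+ 2 - (1 - (r ^+ 2)^-1) =
    (s + 1) ^+ 2 / (r ^+ 2 * n ^+ 2).
  by rewrite expr_div_n exprMn n2; field; rewrite -n2 sqrf_eq0 n0 r0.
exact: divr_ge0 (sqr_ge0 _) (mulr_ge0 (sqr_ge0 _) (sqr_ge0 _)).
Qed.

Theorem lemma3 (R : realType) (d : nat) (x p : 'rV[R]_d) :
  enorm x = 1 -> 1 < enorm p ->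
  let y := (enorm (p + x))^-1 *: (p + x) in
  enorm ((enorm p)^-1 *: p - y) <=
    Num.sqrt (2 - 2 * Num.sqrt (1 - (enorm p ^+ 2)^-1)).
Proof.
move=> x1 p_gt1 /=.
have p_gt0 : 0 < enorm p := lt_trans ltr01 p_gt1.
have dot_le := normr_dotv_le p x x1.
have n2 : enorm (p + x) ^+ 2 = enorm p ^+ 2 + 2 * dotv p x + 1.
  by rewrite enormD_sqr x1 expr1n.
have n_gt0 : 0 < enorm (p + x).
  rewrite lt0r enorm_ge0 andbT -sqrf_eq0 n2.
  by move/ler_normlP: dot_le => [? ?]; rewrite gt_eqF //; nra.
rewrite enorm_normalizeB ?gt_eqF // dotvDr -enorm_sqr.
apply: ler_wsqrtr; rewrite lerD2l lerN2 ler_pM2l //.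
exact: sqrt_1_subVsqr_le.
Qed.
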